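(* Let $d\ge0$ and let $$f=\sum_{i+j\le d}\frac{d!}{i!\,j!\,(d-(i+j))!}\,c_{i,j}\,u_3^{d-(i+j)}u_1^{i}u_2^{j},\qquad c_{i,j}\in\mathbb K[A],$$ be an irreducible contravariant of order $d$ of the ternary form of degree $n$. Then: (i) the vector space $C_d=\langle c_{i,j}: i+j\le d\rangle$ is an irreducible $\mathfrak{sl}_3$-submodule of $\mathbb K[A]$ isomorphic to $\Gamma_{0,d}$; (ii) $c_{0,0}$ is a highest vector of $C_d$, of weight $[0,d]$; (iii) $f=\sum_{i+j\le d}\frac{(-1)^{i+j}}{i!\,j!}\,\hat D_2^{j}\hat D_3^{i}(c_{0,0})\,u_3^{d-(i+j)}u_1^{i}u_2^{j}$.
   Context: $\mathbb K$ is a field of characteristic $0$, $n\ge1$, $\mathbb K[A]=\mathbb K[a_{i,j}: i,j\ge0,\ i+j\le n]$ is the coordinate ring of the space of ternary forms $\sum_{i+j\le n}\frac{n!}{i!j!(n-i-j)!}a_{i,j}x_1^{n-i-j}x_2^ix_3^j$. $\mathfrak{sl}_3$ acts by derivations on $\mathbb K[A,u_1,u_2,u_3]$; the operators for $E_{12},E_{23},E_{13},E_{21},E_{32},E_{31},E_{11}-E_{22},E_{22}-E_{33}$ are $D_1,D_2,D_3,\hat D_1,\hat D_2,\hat D_3,E_1,E_2$. On generators of $\mathbb K[A]$ (with $a_{i,j}=0$ if an index is negative or $i+j>n$): $D_1(a_{i,j})=i a_{i-1,j}$, $D_2(a_{i,j})=j a_{i+1,j-1}$, $D_3(a_{i,j})=j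 a_{i,j-1}$, $\hat D_1(a_{i,j})=(n-i-j)a_{i+1,j}$, $\hat D_2(a_{i,j})=i a_{i-1,j+1}$, $\hat D_3(a_{i,j})=(n-i-j)a_{i,j+1}$, $E_1(a_{i,j})=(n-2i-j)a_{i,j}$, $E_2(a_{i,j})=(i-j)a_{i,j}$. The variables $u_1,u_2,u_3$ span the dual of the standard module $\langle x_1,x_2,x_3\rangle$ (on which $D_1=-x_2\partial_{x_1}$, $D_2=-x_3\partial_{x_2}$, $D_3=-x_3\partial_{x_1}$, $\hat D_1=-x_1\partial_{x_2}$, $\hat D_2=-x_2\partial_{x_3}$, $\hat D_3=-x_1\partial_{x_3}$), so that $x_1u_1+x_2u_2+x_3u_3$ is invariant; explicitly $D_1=u_1\partial_{u_2}$, $D_2=u_2\partial_{u_3}$, $D_3=u_1\partial_{u_3}$, $\hat D_1=u_2\partial_{u_1}$, $\hat D_2=u_3\partial_{u_2}$, $\hat D_3=u_3\partial_{u_1}$, $E_1=u_1\partial_{u_1}-u_2\partial_{u_2}$, $E_2=u_2\partial_{u_2}-u_3\partial_{u_3}$ on the $u$'s. A contravariant of order $d$ is an element of $\mathbb K[A,u_1,u_2,u_3]$ homogeneous of degree $d$ in the $u$'s and $SL_3$-invariant (equivalently annihilated by all these derivations); ''irreducible'' is used in the classical sense (nonzero, not a polynomial in contravariants of smaller degree). $\Gamma_{m_1,m_2}$ denotes the irreducible finite-dimensional $\mathfrak{sl}_3$-module of highest weight $[m_1,m_2]$, i.e. generated by a nonzero vector $v$ (a highest vector) with $D_1v=D_2v=D_3v=0$,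 $E_1v=m_1v$, $E_2v=m_2v$. *)

From HB Require Import structures.
From mathcomp Require Import all_boot all_order all_algebra.
From mathcomp Require Import mpoly.
Set Implicit Arguments. Unset Strict Implicit. Unset Printing Implicit Defensive.
Import Order.TTheory GRing.Theory Num.Theory.
Local Open Scope ring_scope.

Section Ternary.
Variables (K : fieldType) (n : nat).

(* index set of the coefficients a_{i,j}, i + j <= n *)
Definition AIdx := {p : 'I_n.+1 * 'I_n.+1 | (p.1 + p.2 <= n)%N}.
Definition NA := #|{: AIdx}|.

(* K[A] = polynomial ring in the a_{i,j} (variable k <-> enum_val k) *)
Definition KA := {mpoly K[NA]}.

(* a_{i,j}, equal to 0 if i + j > n (negative indices never arise:
   they only occur with a zero factor, and nat subtraction truncates) *)
Definition avar (i j : nat) : KA :=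
  if insub (inord i : 'I_n.+1, inord j : 'I_n.+1) : option AIdx is Some t
  then if (i + j <= n)%N then 'X_(enum_rank t) else 0
  else 0.

Definition idx_i (k : 'I_NA) : nat := (val (enum_val k)).1.
Definition idx_j (k : 'I_NA) : nat := (val (enum_val k)).2.

Definition derA (g : 'I_NA -> KA) (p : KA) : KA :=
  \sum_(k < NA) mderiv k p * g k.

Definition gD1  (k : 'I_NA) : KA := let i := idx_i k in let j := idx_j k in
  i%:R * avar i.-1 j.
Definition gD2  (k : 'I_NA) : KA := let i := idx_i k in let j := idx_j k in
  j%:R * avar i.+1 j.-1.
Definition gD3  (k : 'I_NA) : KA := let i := idx_i k in let j := idx_j k in
  j%:R * avar i j.-1.
Definition ghD1 (k : 'I_NA) : KA := let i := idx_i k in let j := idx_j k in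
  (n - i - j)%N%:R * avar i.+1 j.
Definition ghD2 (k : 'I_NA) : KA := let i := idx_i k in let j := idx_j k in
  i%:R * avar i.-1 j.+1.
Definition ghD3 (k : 'I_NA) : KA := let i := idx_i k in let j := idx_j k in
  (n - i - j)%N%:R * avar i j.+1.
Definition gE1  (k : 'I_NA) : KA := let i := idx_i k in let j := idx_j k in
  ((n%:Z - 2 * i%:Z - j%:Z)%:~R) * avar i j.
Definition gE2  (k : 'I_NA) : KA := let i := idx_i k in let j := idx_j k in
  ((i%:Z - j%:Z)%:~R) * avar i j.

Definition D1A  := derA gD1.
Definition D2A  := derA gD2.
Definition D3A  := derA gD3.
Definition hD1A := derA ghD1.
Definition hD2A := derA ghD2.
Definition hD3A := derA ghD3.
Definition E1A  := derA gE1.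
Definition E2A  := derA gE2.

(* K[A,u1,u2,u3] = K[A][u1,u2,u3]; u1 = 'X_0, u2 = 'X_1, u3 = 'X_2 *)
Definition KAu := {mpoly KA[3]}.
Definition u1 : KAu := 'X_(0 : 'I_3).
Definition u2 : KAu := 'X_(1 : 'I_3).
Definition u3 : KAu := 'X_(2 : 'I_3).

Definition derAu (DA : KA -> KA) (gu : 'I_3 -> KAu) (p : KAu) : KAu :=
  map_mpoly DA p + \sum_(k < 3) mderiv k p * gu k.

Definition vec3 (a b c : KAu) : 'I_3 -> KAu :=
  fun k => if val k == 0%N then a else if val k == 1%N then b else c.

Definition D1  := derAu D1A  (vec3 0 u1 0).           (* u1 d/du2 *)
Definition D2  := derAu D2A  (vec3 0 0 u2).           (* u2 d/du3 *)
Definition D3  := derAu D3A  (vec3 0 0 u1).           (* u1 d/du3 *)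
Definition hD1 := derAu hD1A (vec3 u2 0 0).           (* u2 d/du1 *)
Definition hD2 := derAu hD2A (vec3 0 u3 0).           (* u3 d/du2 *)
Definition hD3 := derAu hD3A (vec3 u3 0 0).           (* u3 d/du1 *)
Definition E1  := derAu E1A  (vec3 u1 (- u2) 0).      (* u1 d/du1 - u2 d/du2 *)
Definition E2  := derAu E2A  (vec3 0 u2 (- u3)).      (* u2 d/du2 - u3 d/du3 *)

Definition contravariant (d : nat) (f : KAu) : Prop :=
  f \is d.-homog /\
  D1 f = 0 /\ D2 f = 0 /\ D3 f = 0 /\ hD1 f = 0 /\ hD2 f = 0 /\ hD3 f = 0 /\
  E1 f = 0 /\ E2 f = 0.

(* degree in the coefficients a_{i,j} (shifted by one; 0 for f = 0) *)
Definition degA (f : KAu) : nat := \max_(m <- msupp f) msize (f@_m).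

Inductive in_alg (S : KAu -> Prop) : KAu -> Prop :=
| in_alg_gen g : S g -> in_alg S g
| in_alg_const (c : K) : in_alg S ((c%:MP : KA)%:MP)
| in_alg_add p q : in_alg S p -> in_alg S q -> in_alg S (p + q)
| in_alg_mul p q : in_alg S p -> in_alg S q -> in_alg S (p * q).

Definition irreducible_contravariant (d : nat) (f : KAu) : Prop :=
  contravariant d f /\ f != 0 /\
  ~ in_alg (fun g => (exists e, contravariant e g) /\ (degA g < degA f)%N) f.

Definition sl3_submodule (W : KA -> Prop) : Prop :=
  W 0 /\ (forall p q, W p -> W q -> W (p + q)) /\
  (forall (a : K) p, W p -> W (a *: p)) /\
  (forall p, W p -> W (D1A p) /\ W (D2A p) /\ W (D3A p) /\ W (hD1A p) /\
                        W (hD2A p) /\ W (hD3A p) /\ W (E1A p) /\ W (E2A p)).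

Definition irreducible_submodule (M : KA -> Prop) : Prop :=
  sl3_submodule M /\ (exists p, M p /\ p != 0) /\
  (forall W : KA -> Prop, sl3_submodule W -> (forall p, W p -> M p) ->
     (exists p, W p /\ p != 0) -> forall p, M p -> W p).

Definition highest_vector (v : KA) (m1 m2 : nat) : Prop :=
  v != 0 /\ D1A v = 0 /\ D2A v = 0 /\ D3A v = 0 /\
  E1A v = m1%:R *: v /\ E2A v = m2%:R *: v.

(* M is an irreducible sl3-module isomorphic to Gamma_{m1,m2}, i.e. an
   irreducible module generated by a highest vector of weight [m1,m2]
   (generation is automatic by irreducibility) *)
Definition iso_Gamma (M : KA -> Prop) (m1 m2 : nat) : Prop :=
  irreducible_submodule M /\ exists v, M v /\ highest_vector v m1 m2.

Definition span_coeffs (d : nat) (c : nat -> nat -> KA) (p : KA) : Prop :=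
  exists lam : nat -> nat -> K,
    p = \sum_(i < d.+1) \sum_(j < d.+1 | (i + j <= d)%N) lam i j *: c i j.

End Ternary.

From HB Require Import structures.
From mathcomp Require Import all_boot all_order all_algebra.
From mathcomp Require Import mpoly.
From mathcomp Require Import zify ring.
Import Order.TTheory GRing.Theory Num.Theory.
Local Open Scope ring_scope.
Set Implicit Arguments. Unset Strict Implicit.

(* Write f = sum_m (d!/m!) c_m u^m over the exponents m of degree d, with
   c_m = c_{m_1,m_2}.  Each operator acts on f as a derivation of K[A] plus a vector
   field on the u's, so the coefficient of u^m in D f = 0 is a relation among the
   c's: D_A c_m = -m_b c_{m - e_b + e_a} when D acts as u_b d/du_a on the u's, and
   E_A c_m = (m_a' - m_a) c_m for the two Cartan elements.  Hence hD3, hD2 raise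
   c_{0,0} to every c_{i,j} (this is (iii)), D3, D2 lower every c_{i,j} to a nonzero
   multiple of c_{0,0}, and E1, E2 act diagonally on the c_{i,j} with pairwise
   distinct weights.  So C_d is a module, and a submodule meeting C_d nontrivially
   contains a weight component, i.e. some c_{i,j}, hence c_{0,0}, hence all of C_d. *)

Section CharZero.
Variable R : idomainType.
Hypothesis R_char0 : [pchar R] =i pred0.

Lemma natf_neq0 m : (0 < m)%N -> m%:R != 0 :> R.
Proof. by rewrite ((pcharf0P R).1 R_char0) -lt0n. Qed.

Lemma natf_inj : injective (fun m => m%:R : R).
Proof.
move=> a b /eqP; wlog ab : a b / (a <= b)%N => [hw|].
  by case: (leqP a b) => [|/ltnW] ba; [|rewrite eq_sym]; move/hw=> ->.
rewrite eq_sym -subr_eq0 -natrB // ((pcharf0P R).1 R_char0) subn_eq0 => ba.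
by apply/eqP; rewrite eqn_leq ab.
Qed.

Lemma natf_subr_inj a b a' b' :
  a%:R - b%:R = a'%:R - b'%:R :> R -> (a + b' = a' + b)%N.
Proof.
move=> h; apply: natf_inj; apply/eqP; rewrite /= !natrD -subr_eq0.
have -> : a%:R + b'%:R - (a'%:R + b%:R) = (a%:R - b%:R) - (a'%:R - b'%:R) :> R.
  by ring.
by rewrite h subrr.
Qed.

End CharZero.

Section MonomialCoefficients.
Variables (R : nzRingType) (k : nat).
Implicit Types (p : {mpoly R[k]}) (m : 'X_{1..k}).

Lemma mcoeff_mulX p b m :
  (p * 'X_b)@_m = if (0 < m b)%N then p@_(m - U_(b)) else 0.
Proof.
case: ifP => [mb_gt0 | mb_eq0].
  by rewrite -{1}(@submK _ U_(b) m) ?lep1mP -?lt0n // addmC mcoeffMX.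
rewrite mcoeffM big1 // => m' /eqP mE.
rewrite mcoeffX; case: eqP => [bE | _]; last by rewrite mulr0.
by rewrite mE mnmDE -bE mnm1E eqxx addn1 in mb_eq0.
Qed.

Lemma mcoeff_mderiv_mulX_diag p a m : (mderiv a p * 'X_a)@_m = p@_m *+ m a.
Proof.
rewrite mcoeff_mulX mcoeff_mderiv; case: ifP => [ma_gt0 | /negbT].
  by rewrite submK ?lep1mP -?lt0n // mnmBE mnm1E eqxx subn1 prednK.
by rewrite -eqn0Ngt => /eqP ->.
Qed.

Definition mfact m := (\prod_(t < k) (m t)`!)%N.

Lemma mfactDU m a : mfact (m + U_(a)) = ((m a).+1 * mfact m)%N.
Proof.
rewrite /mfact (bigD1 a) //= [in RHS](bigD1 a) //= mulnA mnmDE mnm1E eqxx addn1.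
congr (_ * _)%N; apply: eq_bigr => t ta.
by rewrite mnmDE mnm1E eq_sym (negbTE ta) addn0.
Qed.

Lemma mfact_gt0 m : (0 < mfact m)%N.
Proof. by rewrite prodn_gt0 // => t; exact: fact_gt0. Qed.

End MonomialCoefficients.

Definition mon3 (i j k : nat) : 'X_{1..3} :=
  [multinom (nth 0%N [:: i; j; k] t) | t < 3].

Lemma mon3E i j k (t : 'I_3) : mon3 i j k t = nth 0%N [:: i; j; k] t.
Proof. exact: mnmE. Qed.

Lemma eq_mon3 i j k i' j' k' :
  (mon3 i j k == mon3 i' j' k') = [&& i == i', j == j' & k == k'].
Proof.
apply/eqP/and3P => [/mnmP mE | [/eqP-> /eqP-> /eqP->] //].
by have := mE 0; have := mE 1; have := mE 2; rewrite !mon3E /= => -> -> ->.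
Qed.

Lemma mon3_eta (m : 'X_{1..3}) : m = mon3 (m 0) (m 1) (m 2).
Proof.
apply/mnmP => t; rewrite mon3E.
by case: t => [[|[|[|//]]] ?]; congr (m _); apply: val_inj.
Qed.

Lemma mdeg_mon3 i j k : mdeg (mon3 i j k) = (i + j + k)%N.
Proof. by rewrite mdegE !big_ord_recr big_ord0 !mon3E /= add0n. Qed.

Lemma mfact_mon3 i j k : mfact (mon3 i j k) = (i`! * j`! * k`!)%N.
Proof. by rewrite /mfact !big_ord_recr big_ord0 !mon3E /= mul1n. Qed.

Lemma mpolyX_mon3 (R : nzRingType) i j k :
  'X_(2 : 'I_3) ^+ k * 'X_(0 : 'I_3) ^+ i * 'X_(1 : 'I_3) ^+ j
    = 'X_[mon3 i j k] :> {mpoly R[3]}.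
Proof.
rewrite !mpolyXn -!mpolyXD; congr mpolyX; apply/mnmP => t.
rewrite !mnmDE !mulmnE !mnm1E mon3E.
by case: t => [[|[|[|]]] ?] //=; rewrite ?mul0n ?mul1n ?add0n ?addn0.
Qed.

Section Triangle.
Variable d : nat.

Definition triangle : {set 'I_d.+1 * 'I_d.+1} :=
  [set x : 'I_d.+1 * 'I_d.+1 | (x.1 + x.2 <= d)%N].

Lemma sum_triangle (V : nmodType) (F : nat -> nat -> V) :
  \sum_(i < d.+1) \sum_(j < d.+1 | (i + j <= d)%N) F i j
    = \sum_(x in triangle) F x.1 x.2.
Proof. by rewrite pair_big_dep; apply: eq_bigl => x; rewrite inE. Qed.

Lemma sum_triangle_delta (V : nmodType) (F : nat -> nat -> V) (i0 j0 : nat) :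
  \sum_(i < d.+1) \sum_(j < d.+1 | (i + j <= d)%N)
     (if (i == i0 :> nat) && (j == j0 :> nat) then F i j else 0)
  = if (i0 + j0 <= d)%N then F i0 j0 else 0.
Proof.
rewrite (sum_triangle (fun i j => if (i == i0) && (j == j0) then F i j else 0)).
case: leqP => [hij | hij]; last first.
  rewrite big1 // => x; rewrite inE; case: andP => // [[/eqP-> /eqP->]].
  by rewrite leqNgt hij.
have x0T : (inord i0, inord j0) \in triangle by rewrite inE /= !inordK //; lia.
rewrite (bigD1 _ x0T) /= !inordK ?eqxx; try lia.
rewrite big1 ?addr0 // => -[a b] /andP [_ abx0].
case: andP => // [[/eqP ai /eqP bj]].
by move: abx0; rewrite xpair_eqE -!val_eqE /= !inordK ?ai ?bj ?eqxx //; lia.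
Qed.

End Triangle.

Lemma fact_trinomial d i j : (i + j <= d)%N ->
  d`! = ('C(d, i) * 'C(d - i, j) * (i`! * j`! * (d - (i + j))`!))%N.
Proof.
move=> hij; rewrite -(@bin_fact d i) 1?(leq_trans (leq_addr j i)) //.
rewrite -(@bin_fact (d - i) j) ?leq_subRL ?(leq_trans (leq_addr j i)) // subnDA.
ring.
Qed.

Lemma fact_div_trinomial d i j : (i + j <= d)%N ->
  (d`! %/ (i`! * j`! * (d - (i + j))`!))%N = ('C(d, i) * 'C(d - i, j))%N.
Proof.
by move=> hij; rewrite {1}(fact_trinomial hij) mulnK // !muln_gt0 !fact_gt0.
Qed.

Lemma iter_invariant (T : Type) (P : T -> Prop) (g : T -> T) :
  (forall x, P x -> P (g x)) -> forall k x, P x -> P (iter k g x).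
Proof. by move=> Pg; elim=> //= k IH x /IH /Pg. Qed.

Section ScalableIterates.
Variables (R : pzRingType) (V : lmodType R) (T : V -> V).
Hypothesis T_scalable : scalable T.

Lemma iter_scalable0 k : iter k T 0 = 0.
Proof.
by elim: k => //= k ->; rewrite -[X in T X](scale0r (0 : V)) T_scalable scale0r.
Qed.

Lemma iter_scalableZ k a v : iter k T (a *: v) = a *: iter k T v.
Proof. by elim: k => //= k ->; rewrite T_scalable. Qed.

End ScalableIterates.

Lemma iter_ladder (R : comPzRingType) (V : lmodType R) (T : V -> V)
    (v : nat -> V) N : scalable T ->
  (forall k, (k < N)%N -> T (v k) = - (N - k)%:R *: v k.+1) ->
  forall k, (k <= N)%N -> iter k T (v 0%N) = ((-1) ^+ k * (N ^_ k)%:R) *: v k.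
Proof.
move=> T_scalable Tv; elim=> [|k IH] kN; first by rewrite mul1r scale1r.
rewrite iterS IH 1?ltnW // T_scalable Tv // scalerA ffactnSr natrM exprS.
by congr (_ *: _); ring.
Qed.

Section WeightComponents.
Variables (K : fieldType) (V : lmodType K) (I : finType) (J : Type).
Variables (T : J -> {linear V -> V}) (e : J -> I -> K) (W : V -> Prop).
Hypotheses (WD : forall p q, W p -> W q -> W (p + q))
           (WZ : forall a p, W p -> W (a *: p))
           (WT : forall j p, W p -> W (T j p)).

Lemma weight_components_in_subspace (A : {set I}) (w : I -> V) :
  (forall j, {in A, forall x, T j (w x) = e j x *: w x}) ->
  {in A &, forall x y, x != y -> exists j, e j x != e j y} ->
  W (\sum_(x in A) w x) -> {in A, forall x, W (w x)}.
Proof.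
move: {2}#|A| (leqnn #|A|) => N; elim: N A w => [|N IH] A w AN Tw sepA WA x xA.
  by move: AN; rewrite leqn0 cards_eq0 => /eqP A0; rewrite A0 inE in xA.
have [A1 | /set0Pn [y]] := eqVneq (A :\ x) set0.
  have Ax : A = [set x].
    apply/setP => z; rewrite inE; apply/idP/eqP => [zA | -> //].
    apply/eqP/negPn/negP => zx.
    have : z \in A :\ x by rewrite !inE zx zA.
    by rewrite A1 inE.
  by move: WA; rewrite Ax big_set1.
rewrite !inE => /andP [yx yA].
have [j ejxy] : exists j, e j x != e j y by apply: sepA; rewrite // eq_sym.
(* [T j - e j y] kills the [y]-component and rescales the [x]-component by a
   nonzero factor; induct on the remaining components. *)
pose w' z := (e j z - e j y) *: w z.
have W'A : W (\sum_(z in A :\ y) w' z).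
  suff -> : \sum_(z in A :\ y) w' z
             = T j (\sum_(z in A) w z) + (- e j y) *: \sum_(z in A) w z.
    by apply: WD; [apply: WT | apply: WZ].
  rewrite linear_sum scaler_sumr -big_split (big_setD1 y yA) /= Tw //.
  rewrite -scalerDl addrN scale0r add0r.
  by apply: eq_bigr => z; rewrite !inE => /andP [_ zA]; rewrite Tw // -scalerDl.
have xA' : x \in A :\ y by rewrite !inE eq_sym yx.
have /WZ : W (w' x).
  apply: (IH (A :\ y)) => //.
  - by move: AN; rewrite (cardsD1 y A) yA.
  - move=> i z; rewrite !inE => /andP [_ zA].
    by rewrite /w' linearZ /= Tw // !scalerA mulrC.
  - by move=> z z' /setD1P [_ zA] /setD1P [_ z'A]; exact: sepA.
by move=> /(_ (e j x - e j y)^-1); rewrite scalerA mulVf ?subr_eq0 // scale1r.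
Qed.

End WeightComponents.

Section Derivations.
Variables (K : fieldType) (n : nat).

Lemma derA_is_linear (g : 'I_(NA n) -> KA K n) : linear (derA g).
Proof.
move=> a p q; rewrite /derA scaler_sumr -big_split; apply: eq_bigr => k _ /=.
by rewrite linearP mulrDl scalerAl.
Qed.

HB.instance Definition _ g :=
  GRing.isLinear.Build K (KA K n) (KA K n) _ (derA g) (derA_is_linear g).

Lemma scalable_derA (g : 'I_(NA n) -> KA K n) : scalable (derA g).
Proof. by move=> a p; rewrite linearZ. Qed.

Lemma mcoeff_derAu g gu (p : KAu K n) m :
  (derAu (derA g) gu p)@_m = derA g p@_m + \sum_(t < 3) (mderiv t p * gu t)@_m.
Proof. by rewrite mcoeffD mcoeff_map_mpoly raddf_sum. Qed.

End Derivations.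

Section CoefficientSpan.
Variables (K : fieldType) (n d : nat) (c : nat -> nat -> KA K n).
Local Notation span := (span_coeffs d c).

Lemma span0 : span 0.
Proof.
exists (fun _ _ => 0).
by rewrite big1 // => i _; rewrite big1 // => j _; rewrite scale0r.
Qed.

Lemma spanD p q : span p -> span q -> span (p + q).
Proof.
move=> [lp ->] [lq ->]; exists (fun i j => lp i j + lq i j).
rewrite -big_split; apply: eq_bigr => i _.
by rewrite -big_split; apply: eq_bigr => j _; rewrite scalerDl.
Qed.

Lemma spanZ a p : span p -> span (a *: p).
Proof.
move=> [l ->]; exists (fun i j => a * l i j).
rewrite scaler_sumr; apply: eq_bigr => i _.
by rewrite scaler_sumr; apply: eq_bigr => j _; rewrite scalerA.
Qed.

Lemma span_c i j : (i + j <= d)%N -> span (c i j).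
Proof.
move=> hij; exists (fun a b => ((a == i) && (b == j))%:R).
under eq_bigr do under eq_bigr do rewrite scaler_nat mulrb.
by rewrite (sum_triangle_delta d (fun a b => c a b)) hij.
Qed.

Lemma span_scaled_c s i j : s = 0 \/ (i + j <= d)%N -> span (s *: c i j).
Proof. by case=> [-> | hij]; [rewrite scale0r; exact: span0 | exact/spanZ/span_c]. Qed.

Lemma span_derA g : (forall i j, (i + j <= d)%N -> span (derA g (c i j))) ->
  forall p, span p -> span (derA g p).
Proof.
move=> span_gc p [l ->]; rewrite linear_sum.
apply: big_ind => [||i _]; [exact: span0 | exact: spanD |]; rewrite linear_sum.
apply: big_ind => [||j hij]; [exact: span0 | exact: spanD |].
by rewrite linearZ; apply/spanZ/span_gc.
Qed.

End CoefficientSpan.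

Section Contravariant.
Variables (K : fieldType) (n d : nat) (f : KAu K n) (c : nat -> nat -> KA K n).
Hypothesis pchar0 : [pchar K] =i pred0.
Hypothesis f_def : f = \sum_(i < d.+1) \sum_(j < d.+1 | (i + j <= d)%N)
  (((d`! %/ (i`! * j`! * (d - (i + j))`!))%:R *: c i j)%:MP
     * (u3 K n ^+ (d - (i + j)) * u1 K n ^+ i * u2 K n ^+ j)).

Definition multinomial_coef (m : 'X_{1..3}) : K := d`!%:R / (mfact m)%:R.

Lemma multinomial_coef_neq0 m : multinomial_coef m != 0.
Proof.
by rewrite mulf_eq0 invr_eq0 negb_or !(natf_neq0 pchar0) ?fact_gt0 ?mfact_gt0.
Qed.

Lemma trinomial_coefE i j : (i + j <= d)%N ->
  (d`! %/ (i`! * j`! * (d - (i + j))`!))%:R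
    = multinomial_coef (mon3 i j (d - (i + j))).
Proof.
move=> hij; rewrite pchar0_natf_div // /multinomial_coef ?mfact_mon3 //.
by rewrite [X in (_ %| X)%N](fact_trinomial hij) dvdn_mull.
Qed.

Lemma mcoeff_f m :
  f@_m = if mdeg m == d then multinomial_coef m *: c (m 0) (m 1) else 0.
Proof.
rewrite f_def raddf_sum /=; under eq_bigr do rewrite raddf_sum /=.
rewrite [in LHS](mon3_eta m).
under eq_bigr do under eq_bigr do rewrite /u1 /u2 /u3 mpolyX_mon3 mcoeffCM
  mcoeffX eq_mon3 mulr_natr mulrb andbA if_and.
rewrite (sum_triangle_delta d (fun i j => if (d - (i + j))%N == m 2
  then (d`! %/ (i`! * j`! * (d - (i + j))`!))%:R *: c i j else 0)).
rewrite [X in mdeg X](mon3_eta m) mdeg_mon3.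
case: leqP => hm; last by case: eqP => //; lia.
case: eqP => [m2E | m2N]; last by case: eqP => //; lia.
by rewrite trinomial_coefE // m2E -mon3_eta (_ : _ + _ == d)%N //; apply/eqP; lia.
Qed.

Lemma mcoeff_mderiv_f_mulX (a b : 'I_3) m : a != b -> mdeg m = d ->
  (mderiv a f * 'X_b)@_m
    = (multinomial_coef m * (m b)%:R)
        *: c ((m - U_(b) + U_(a))%MM 0) ((m - U_(b) + U_(a))%MM 1).
Proof.
move=> ab dm; rewrite mcoeff_mulX; case: ifP => [mb_gt0 | /negbT]; last first.
  by rewrite -eqn0Ngt => /eqP ->; rewrite mulr0 scale0r.
set m' := (m - U_(b))%MM.
have mE : m = (m' + U_(b))%MM by rewrite submK // lep1mP -lt0n.
have dm' : mdeg (m' + U_(a)) = d by rewrite -dm mE !mdegD !mdeg1.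
rewrite mcoeff_mderiv mcoeff_f dm' eqxx -scaler_nat scalerA; congr (_ *: _).
rewrite /multinomial_coef mE !mfactDU mnmDE mnm1E eqxx addn1 !natrM.
by field; rewrite !nat1r !(natf_neq0 pchar0) ?mfact_gt0.
Qed.

(* For [m b = 0] the (truncated) shifted index is junk, but its factor vanishes. *)
Lemma derA_c_off_diag g gu (a b : 'I_3) :
  a != b -> gu =1 (fun t => if t == a then 'X_b else 0) ->
  derAu (derA g) gu f = 0 -> forall m, mdeg m = d ->
  derA g (c (m 0) (m 1))
    = - (m b)%:R *: c ((m - U_(b) + U_(a))%MM 0) ((m - U_(b) + U_(a))%MM 1).
Proof.
move=> ab guE Tf m dm; have /eqP := congr1 (mcoeff m) Tf.
rewrite mcoeff_derAu mcoeff0 (bigD1 a) //= big1 => [|t ta]; last first.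
  by rewrite guE (negbTE ta) mulr0 mcoeff0.
rewrite addr0 guE eqxx mcoeff_mderiv_f_mulX // mcoeff_f dm eqxx linearZ /=.
rewrite -scalerA -scalerDr scaler_eq0 (negbTE (multinomial_coef_neq0 m)) /=.
by rewrite addr_eq0 -scaleNr => /eqP.
Qed.

Lemma derA_c_diag g gu (a a' : 'I_3) :
  a != a' ->
  gu =1 (fun t => if t == a then 'X_a else if t == a' then - 'X_a' else 0) ->
  derAu (derA g) gu f = 0 -> forall m, mdeg m = d ->
  derA g (c (m 0) (m 1)) = ((m a')%:R - (m a)%:R) *: c (m 0) (m 1).
Proof.
move=> aa' guE Tf m dm; have /eqP := congr1 (mcoeff m) Tf.
rewrite mcoeff_derAu mcoeff0 (bigD1 a) //= (bigD1 a') 1?eq_sym //=.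
rewrite big1 => [|t /andP [ta ta']]; last first.
  by rewrite guE (negbTE ta) (negbTE ta') mulr0 mcoeff0.
rewrite addr0 !guE eqxx (eq_sym a') (negbTE aa') eqxx mulrN mcoeffN.
rewrite !mcoeff_mderiv_mulX_diag mcoeff_f dm eqxx linearZ /= -!scaler_nat !scalerA.
have w_neq0 := multinomial_coef_neq0 m; set w := multinomial_coef m in w_neq0 *.
clearbody w; rewrite eq_sym ![_ * w]mulrC -!scalerA -scalerBr -scalerDr.
by rewrite scaler_eq0 (negbTE w_neq0) /= addr_eq0 -scalerBl -scaleNr opprB => /eqP.
Qed.

Lemma mdeg_triangle i j : (i + j <= d)%N -> mdeg (mon3 i j (d - (i + j))) = d.
Proof. by move=> hij; rewrite mdeg_mon3 subnKC. Qed.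

Hypothesis f_contra : contravariant d f.

Lemma D1A_c i j : (i + j <= d)%N -> D1A (c i j) = - i%:R *: c i.-1 j.+1.
Proof.
have [_ [D1f _]] := f_contra; move=> /mdeg_triangle dm.
have := derA_c_off_diag (a := 1) (b := 0) isT _ D1f dm.
rewrite !(mnmDE, mnmBE, mnm1E, mon3E) /= ?subn0 ?addn0 ?subn1 ?addn1.
by apply; case=> [[|[|[|]]] ?].
Qed.

Lemma D2A_c i j : (i + j <= d)%N -> D2A (c i j) = - j%:R *: c i j.-1.
Proof.
have [_ [_ [D2f _]]] := f_contra; move=> /mdeg_triangle dm.
have := derA_c_off_diag (a := 2) (b := 1) isT _ D2f dm.
rewrite !(mnmDE, mnmBE, mnm1E, mon3E) /= ?subn0 ?addn0 ?subn1 ?addn1.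
by apply; case=> [[|[|[|]]] ?].
Qed.

Lemma D3A_c i j : (i + j <= d)%N -> D3A (c i j) = - i%:R *: c i.-1 j.
Proof.
have [_ [_ [_ [D3f _]]]] := f_contra; move=> /mdeg_triangle dm.
have := derA_c_off_diag (a := 2) (b := 0) isT _ D3f dm.
rewrite !(mnmDE, mnmBE, mnm1E, mon3E) /= ?subn0 ?addn0 ?subn1 ?addn1.
by apply; case=> [[|[|[|]]] ?].
Qed.

Lemma hD1A_c i j : (i + j <= d)%N -> hD1A (c i j) = - j%:R *: c i.+1 j.-1.
Proof.
have [_ [_ [_ [_ [hD1f _]]]]] := f_contra; move=> /mdeg_triangle dm.
have := derA_c_off_diag (a := 0) (b := 1) isT _ hD1f dm.
rewrite !(mnmDE, mnmBE, mnm1E, mon3E) /= ?subn0 ?addn0 ?subn1 ?addn1.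
by apply; case=> [[|[|[|]]] ?].
Qed.

Lemma hD2A_c i j : (i + j <= d)%N ->
  hD2A (c i j) = - (d - (i + j))%:R *: c i j.+1.
Proof.
have [_ [_ [_ [_ [_ [hD2f _]]]]]] := f_contra; move=> /mdeg_triangle dm.
have := derA_c_off_diag (a := 1) (b := 2) isT _ hD2f dm.
rewrite !(mnmDE, mnmBE, mnm1E, mon3E) /= ?subn0 ?addn0 ?subn1 ?addn1.
by apply; case=> [[|[|[|]]] ?].
Qed.

Lemma hD3A_c i j : (i + j <= d)%N ->
  hD3A (c i j) = - (d - (i + j))%:R *: c i.+1 j.
Proof.
have [_ [_ [_ [_ [_ [_ [hD3f _]]]]]]] := f_contra; move=> /mdeg_triangle dm.
have := derA_c_off_diag (a := 0) (b := 2) isT _ hD3f dm.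
rewrite !(mnmDE, mnmBE, mnm1E, mon3E) /= ?subn0 ?addn0 ?subn1 ?addn1.
by apply; case=> [[|[|[|]]] ?].
Qed.

Lemma E1A_c i j : (i + j <= d)%N -> E1A (c i j) = (j%:R - i%:R) *: c i j.
Proof.
have [_ [_ [_ [_ [_ [_ [_ [E1f _]]]]]]]] := f_contra; move=> /mdeg_triangle dm.
have := derA_c_diag (a := 0) (a' := 1) isT _ E1f dm.
by rewrite !mon3E /=; apply; case=> [[|[|[|]]] ?].
Qed.

Lemma E2A_c i j : (i + j <= d)%N ->
  E2A (c i j) = ((d - (i + j))%:R - j%:R) *: c i j.
Proof.
have [_ [_ [_ [_ [_ [_ [_ [_ E2f]]]]]]]] := f_contra; move=> /mdeg_triangle dm.
have := derA_c_diag (a := 1) (a' := 2) isT _ E2f dm.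
by rewrite !mon3E /=; apply; case=> [[|[|[|]]] ?].
Qed.

Lemma iter_lower_c i j : (i + j <= d)%N ->
  iter i (@D3A K n) (iter j (@D2A K n) (c i j))
    = ((-1) ^+ (i + j) * (i`! * j`!)%:R) *: c 0 0.
Proof.
move=> hij.
have lower_j := iter_ladder (T := @D2A K n) (v := fun k => c i (j - k)) (N := j)
  (scalable_derA _).
have lower_i := iter_ladder (T := @D3A K n) (v := fun k => c (i - k) 0) (N := i)
  (scalable_derA _).
rewrite /= !subn0 in lower_j lower_i.
rewrite lower_j // => [|k kj]; last by rewrite D2A_c ?subnS //; lia.
rewrite subnn (iter_scalableZ (scalable_derA (@gD3 K n))) lower_i // => [|k ki].
  by rewrite subnn !ffactnn scalerA exprD natrM; congr (_ *: _); ring.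
by rewrite D3A_c ?subnS //; lia.
Qed.

Lemma iter_raise_c00 i j : (i + j <= d)%N ->
  iter j (@hD2A K n) (iter i (@hD3A K n) (c 0 0))
    = ((-1) ^+ (i + j) * ('C(d, i) * 'C(d - i, j) * (i`! * j`!))%:R) *: c i j.
Proof.
move=> hij.
have raise_i := iter_ladder (T := @hD3A K n) (v := fun k => c k 0) (N := d)
  (scalable_derA _).
have raise_j := iter_ladder (T := @hD2A K n) (v := fun k => c i k) (N := d - i)
  (scalable_derA _).
rewrite /= in raise_i raise_j.
rewrite raise_i => [|k kd|]; [|by rewrite hD3A_c ?addn0 //; lia|lia].
rewrite (iter_scalableZ (scalable_derA (@ghD2 K n))) raise_j => [|k kdi|]; last lia.
- by rewrite scalerA exprD -!bin_ffact !natrM; congr (_ *: _); ring.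
- by rewrite hD2A_c ?subnDA //; lia.
Qed.

Lemma iter_raise_c00_scaled i j : (i + j <= d)%N ->
  ((-1) ^+ (i + j) / (i`!%:R * j`!%:R) : K)
      *: iter j (@hD2A K n) (iter i (@hD3A K n) (c 0 0))
    = (d`! %/ (i`! * j`! * (d - (i + j))`!))%:R *: c i j.
Proof.
move=> hij; rewrite iter_raise_c00 // scalerA fact_div_trinomial //.
congr (_ *: _); rewrite !natrM -signr_odd.
by case: odd; rewrite ?expr0 ?expr1; field; rewrite !(natf_neq0 pchar0) ?fact_gt0.
Qed.

Lemma trinomial_coef_neq0 i j : (i + j <= d)%N ->
  (d`! %/ (i`! * j`! * (d - (i + j))`!))%:R != 0 :> K.
Proof.
move=> hij; rewrite fact_div_trinomial // (natf_neq0 pchar0) //.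
by rewrite muln_gt0 !bin_gt0; lia.
Qed.

Lemma f_expansion : f = \sum_(i < d.+1) \sum_(j < d.+1 | (i + j <= d)%N)
  ((((-1) ^+ (i + j) / (i`!%:R * j`!%:R) : K)
      *: iter j (@hD2A K n) (iter i (@hD3A K n) (c 0 0)))%:MP
    * (u3 K n ^+ (d - (i + j)) * u1 K n ^+ i * u2 K n ^+ j)).
Proof.
rewrite {1}f_def; apply: eq_bigr => i _; apply: eq_bigr => j hij.
by rewrite iter_raise_c00_scaled.
Qed.

Hypothesis f_neq0 : f != 0.

Lemma c00_neq0 : c 0 0 != 0.
Proof.
apply: contra f_neq0 => /eqP c00; rewrite f_expansion big1 // => i _.
rewrite big1 // => j _; rewrite c00 (iter_scalable0 (scalable_derA (@ghD3 K n))).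
by rewrite (iter_scalable0 (scalable_derA (@ghD2 K n))) scaler0 mpolyC0 mul0r.
Qed.

Lemma c00_highest_vector : highest_vector (c 0 0) 0 d.
Proof.
split; first exact: c00_neq0.
by rewrite D1A_c // D2A_c // D3A_c // E1A_c // E2A_c // oppr0 !addr0 subn0 !scale0r.
Qed.

Local Notation span := (span_coeffs d c).

Lemma span_sl3_submodule : sl3_submodule span.
Proof.
split; [exact: span0 | split; [exact: spanD | split; [exact: spanZ |]]].
move=> p sp.
split; last split; last split; last split; last split; last split; last split;
  apply: span_derA sp => i j hij.
- rewrite -/(@D1A K n) D1A_c //; apply: span_scaled_c.
  by have [->|] := eqVneq i 0%N; [left; rewrite oppr0 | right; lia].
- by rewrite -/(@D2A K n) D2A_c //; apply: span_scaled_c; right; lia.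
- by rewrite -/(@D3A K n) D3A_c //; apply: span_scaled_c; right; lia.
- rewrite -/(@hD1A K n) hD1A_c //; apply: span_scaled_c.
  by have [->|] := eqVneq j 0%N; [left; rewrite oppr0 | right; lia].
- rewrite -/(@hD2A K n) hD2A_c //; apply: span_scaled_c.
  by have [->|] := eqVneq (d - (i + j))%N 0%N; [left; rewrite oppr0 | right; lia].
- rewrite -/(@hD3A K n) hD3A_c //; apply: span_scaled_c.
  by have [->|] := eqVneq (d - (i + j))%N 0%N; [left; rewrite oppr0 | right; lia].
- by rewrite -/(@E1A K n) E1A_c //; apply: span_scaled_c; right.
- by rewrite -/(@E2A K n) E2A_c //; apply: span_scaled_c; right.
Qed.

Definition weight (b : bool) (x : 'I_d.+1 * 'I_d.+1) : K :=
  if b then x.2%:R - x.1%:R else (d - (x.1 + x.2))%:R - x.2%:R.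

Lemma weight_separates x y : x \in triangle d -> y \in triangle d -> x != y ->
  exists b, weight b x != weight b y.
Proof.
case: x y => [x1 x2] [y1 y2]; rewrite !inE => xT yT xy.
apply/existsP; apply: contraNT xy; rewrite negb_exists => /forallP sameW.
have := natf_subr_inj pchar0 (eqP (negbNE (sameW true))).
have := natf_subr_inj pchar0 (eqP (negbNE (sameW false))).
by rewrite xpair_eqE -!val_eqE /= => ? ?; apply/andP; split; apply/eqP; lia.
Qed.

Section Submodules.
Variable W : KA K n -> Prop.
Hypothesis W_submodule : sl3_submodule W.

Lemma submodule_meets_c p : W p -> span p -> p != 0 ->
  exists i j, (i + j <= d)%N /\ W (c i j).
Proof.
have [_ [WD [WZ Wops]]] := W_submodule; move=> Wp [l pE] p_neq0.
pose w (x : 'I_d.+1 * 'I_d.+1) := l x.1 x.2 *: c x.1 x.2.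
have {}pE : p = \sum_(x in triangle d) w x.
  by rewrite pE (sum_triangle d (fun i j => l i j *: c i j)).
have Ww := @weight_components_in_subspace K (KA K n) _ bool
  (fun b => derA (if b then @gE1 K n else @gE2 K n)) weight W WD WZ.
have [x /andP [xT wx_neq0] | w0] := pickP [pred x | (x \in triangle d) && (w x != 0)].
  have Wwx : W (w x).
    apply: (Ww _ (triangle d) w) xT; rewrite -?pE //.
    - by case=> q /Wops [_ [_ [_ [_ [_ [_ []]]]]]].
    - case=> z; rewrite inE => zT; rewrite linearZ /=.
        by rewrite -/(@E1A K n) E1A_c // scalerA mulrC -scalerA.
      by rewrite -/(@E2A K n) E2A_c // scalerA mulrC -scalerA.
    - exact: weight_separates.
  exists x.1, x.2; split; first by move: xT; rewrite inE.
  have lx_neq0 : l x.1 x.2 != 0.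
    by apply: contraNneq wx_neq0 => lx0; rewrite /w lx0 scale0r.
  by rewrite -[c _ _]scale1r -(mulVf lx_neq0) -scalerA; apply: WZ.
case/negP: p_neq0; rewrite pE big1 // => x xT.
by move: (w0 x); rewrite /= xT => /negbFE/eqP.
Qed.

Lemma submodule_c00_of_c i j : (i + j <= d)%N -> W (c i j) -> W (c 0 0).
Proof.
have [_ [_ [WZ Wops]]] := W_submodule; move=> hij Wc.
have WD2 : forall p, W p -> W (D2A p) by move=> p /Wops [_ []].
have WD3 : forall p, W p -> W (D3A p) by move=> p /Wops [_ [_ []]].
have := iter_invariant WD3 i (iter_invariant WD2 j Wc).
rewrite iter_lower_c // => /(WZ ((-1) ^+ (i + j) * (i`! * j`!)%:R)^-1).
rewrite scalerA mulVf ?scale1r // mulf_neq0 ?signr_eq0 // (natf_neq0 pchar0) //.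
by rewrite muln_gt0 !fact_gt0.
Qed.

Lemma span_sub_submodule : W (c 0 0) -> forall p, span p -> W p.
Proof.
have [W0 [WD [WZ Wops]]] := W_submodule; move=> Wc00 p [l ->].
have WhD2 : forall p, W p -> W (hD2A p) by move=> q /Wops [_ [_ [_ [_ []]]]].
have WhD3 : forall p, W p -> W (hD3A p) by move=> q /Wops [_ [_ [_ [_ [_ []]]]]].
apply: big_ind => // i _; apply: big_ind => // j hij; apply: (WZ).
rewrite -[c i j]scale1r -(mulVf (trinomial_coef_neq0 hij)) -scalerA.
rewrite -iter_raise_c00_scaled //.
exact/WZ/WZ/(iter_invariant WhD2)/(iter_invariant WhD3).
Qed.

End Submodules.

Lemma span_irreducible : irreducible_submodule span.
Proof.
split; first exact: span_sl3_submodule.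
split; first by exists (c 0 0); split; [exact: span_c | exact: c00_neq0].
move=> W W_submodule W_span [p [Wp p_neq0]].
have [i [j [hij Wc]]] := submodule_meets_c W_submodule Wp (W_span p Wp) p_neq0.
exact/(span_sub_submodule W_submodule)/(submodule_c00_of_c W_submodule hij).
Qed.

End Contravariant.

Theorem mainTheorem6 (K : fieldType) (n : nat) (d : nat)
    (f : KAu K n) (c : nat -> nat -> KA K n) :
  [pchar K] =i pred0 -> (1 <= n)%N ->
  f = \sum_(i < d.+1) \sum_(j < d.+1 | (i + j <= d)%N)
        (((d`! %/ (i`! * j`! * (d - (i + j))`!))%:R *: c i j)%:MP
          * (u3 K n ^+ (d - (i + j)) * u1 K n ^+ i * u2 K n ^+ j)) ->
  irreducible_contravariant d f ->
  [/\ iso_Gamma (span_coeffs d c) 0 d,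
      span_coeffs d c (c 0%N 0%N) /\ highest_vector (c 0%N 0%N) 0 d &
      f = \sum_(i < d.+1) \sum_(j < d.+1 | (i + j <= d)%N)
        ((((-1) ^+ (i + j) / (i`!%:R * j`!%:R) : K)
            *: iter j (@hD2A K n) (iter i (@hD3A K n) (c 0%N 0%N)))%:MP
          * (u3 K n ^+ (d - (i + j)) * u1 K n ^+ i * u2 K n ^+ j))].
Proof.
move=> pchar0 _ f_def [f_contra [f_neq0 _]].
have c00_hv := c00_highest_vector pchar0 f_def f_contra f_neq0.
have c00_span := span_c (d := d) (i := 0) (j := 0) c (leq0n d).
split; last exact: f_expansion pchar0 f_def f_contra.
  split; first exact: span_irreducible pchar0 f_def f_contra f_neq0.
  by exists (c 0 0).
by split.
Qed.
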